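(* Every metric space $(X,d)$ with the separated approximation property (SAP) has the locally finite approximation property (LFAP).
   Context: A metric space $(X,d)$ has the separated approximation property (SAP) if for each $\varepsilon>0$ there is a sequence of continuous maps $f_n:X\to X$, $n\in\omega$, such that each $f_n$ is $\varepsilon$-homotopic to $\mathrm{id}_X$ and $\inf_{n\ne m} d(f_n(X),f_m(X))>0$, where $d(A,B)=\inf\{d(a,b):a\in A,\ b\in B\}$. Two maps $f,g:A\to X$ are $\varepsilon$-homotopic if there is a homotopy $(h_t)_{t\in[0,1]}:A\to X$ with $h_0=f$, $h_1=g$ and $\operatorname{diam}\{h_t(a):t\in[0,1]\}\le\varepsilon$ for all $a\in A$. A topological space $X$ has the locally finite approximation property (LFAP) if for each open cover $\mathcal U$ of $X$ there is a sequence of continuous maps $f_n:X\to X$, $n\in\omega$, each $\mathcal U$-near to $\mathrm{id}_X$ (for every $x$ some $U\in\mathcal U$ contains both $x$ and $f_n(x)$), such that the family $(f_n(X))_{n\in\omega}$ is locally finite in $X$. *)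

From Stdlib Require Import Reals.
Open Scope R_scope.

Definition is_metric {X : Type} (d : X -> X -> R) : Prop :=
  (forall x y, 0 <= d x y) /\
  (forall x y, d x y = 0 <-> x = y) /\
  (forall x y, d x y = d y x) /\
  (forall x y z, d x z <= d x y + d y z).

Definition m_open {X : Type} (d : X -> X -> R) (U : X -> Prop) : Prop :=
  forall x, U x -> exists r, 0 < r /\ forall y, d x y < r -> U y.

Definition m_continuous {X : Type} (d : X -> X -> R) (f : X -> X) : Prop :=
  forall x eps, 0 < eps -> exists delta, 0 < delta /\
    forall y, d x y < delta -> d (f x) (f y) < eps.

Definition homotopy_continuous {X : Type} (d : X -> X -> R)
    (h : R -> X -> X) : Prop :=
  forall t x eps, 0 <= t <= 1 -> 0 < eps -> exists delta, 0 < delta /\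
    forall s y, 0 <= s <= 1 -> Rabs (s - t) < delta -> d x y < delta ->
      d (h t x) (h s y) < eps.

Definition eps_homotopic {X : Type} (d : X -> X -> R) (eps : R)
    (f g : X -> X) : Prop :=
  exists h : R -> X -> X,
    homotopy_continuous d h /\
    (forall a, h 0 a = f a) /\ (forall a, h 1 a = g a) /\
    (forall a t s, 0 <= t <= 1 -> 0 <= s <= 1 -> d (h t a) (h s a) <= eps).

(* Separated approximation property.  The condition
   inf_{n<>m} d(f_n(X), f_m(X)) > 0, with d(A,B) = inf{d(a,b)}, is written
   out as: some delta > 0 is a lower bound of all these distances. *)
Definition SAP {X : Type} (d : X -> X -> R) : Prop :=
  forall eps, 0 < eps ->
    exists f : nat -> X -> X,
      (forall n, m_continuous d (f n)) /\
      (forall n, eps_homotopic d eps (f n) (fun x => x)) /\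
      (exists delta, 0 < delta /\
         forall n m, n <> m -> forall x y, delta <= d (f n x) (f m y)).

Definition open_cover {X : Type} (d : X -> X -> R)
    (C : (X -> Prop) -> Prop) : Prop :=
  (forall U, C U -> m_open d U) /\ (forall x, exists U, C U /\ U x).

Definition cover_near {X : Type} (C : (X -> Prop) -> Prop) (f g : X -> X) : Prop :=
  forall x, exists U, C U /\ U (f x) /\ U (g x).

Definition locally_finite {X : Type} (d : X -> X -> R)
    (A : nat -> X -> Prop) : Prop :=
  forall x, exists V, m_open d V /\ V x /\
    exists N : nat, forall n, (exists y, V y /\ A n y) -> (n < N)%nat.

Definition LFAP {X : Type} (d : X -> X -> R) : Prop :=
  forall C, open_cover d C ->
    exists f : nat -> X -> X,
      (forall n, m_continuous d (f n)) /\
      (forall n, cover_near C (fun x => x) (f n)) /\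
      locally_finite d (fun n y => exists x, f n x = y).

(* Let rho be a 1-Lipschitz Lebesgue function of the cover: the ball of radius rho(x)/2
   about x lies in one member of the cover.  Apply SAP with a sequence eps_k -> 0, each
   eps_(k+1) small against the separation constant delta_k of stage k, and for each n glue the
   homotopies of all stages into one path of x passing through f^k_n x,
   f^(k+1)_n (f^k_n x), f^(k+1)_n x, ...; between those points it stays eps_(k+1)-close to the
   image of f^k_n or inside the image of f^(k+1)_n.  The map g_n sends x to the point of its
   path at time 1/rho(x).  It moves x by less than rho(x)/2, so it is near the identity for the
   cover, and on a small ball around x0 only finitely many stages occur, at each of which the
   separated images of the f^k_n let at most one n reach the ball. *)

From Stdlib Require Import Reals ZArith Lra Lia Classical ClassicalEpsilon.
Open Scope R_scope.

Definition nat_floor (u : R) : nat := Z.to_nat (up u - 1).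

Lemma nat_floor_spec u : 0 <= u -> INR (nat_floor u) <= u < INR (nat_floor u) + 1.
Proof.
  intros Hu. destruct (archimed u) as [Hup Hup1].
  assert (Hpos : (0 < up u)%Z) by (apply lt_0_IZR; lra).
  unfold nat_floor. rewrite INR_IZR_INZ, Z2Nat.id, minus_IZR by lia.
  simpl. lra.
Qed.

Lemma nat_floor_unique u j : INR j <= u < INR j + 1 -> nat_floor u = j.
Proof.
  intros Hj. pose proof (pos_INR j) as Hj0.
  destruct (nat_floor_spec u ltac:(lra)) as [Hf Hf1].
  destruct (Nat.lt_trichotomy (nat_floor u) j) as [Hlt|[Heq|Hlt]]; [|exact Heq|];
    apply le_INR in Hlt; rewrite S_INR in Hlt; lra.
Qed.

Lemma nat_floor_le u v : 0 <= u <= v -> (nat_floor u <= nat_floor v)%nat.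
Proof.
  intros Huv. destruct (nat_floor_spec u) as [Hu _]; [lra|].
  destruct (nat_floor_spec v) as [_ Hv]; [lra|].
  apply Nat.lt_succ_r, INR_lt. rewrite S_INR. lra.
Qed.

Definition real_continuous {X : Type} (d : X -> X -> R) (u : X -> R) : Prop :=
  forall x eps, 0 < eps -> exists delta, 0 < delta /\
    forall y, d x y < delta -> Rabs (u y - u x) < eps.

Section HomotopyContinuity.
Context {X : Type} (d : X -> X -> R).

Lemma homotopy_continuous_at0 (h : R -> X -> X) :
  homotopy_continuous d h -> m_continuous d (h 0).
Proof.
  intros Hh x eps Heps. destruct (Hh 0 x eps ltac:(lra) Heps) as (delta & Hdelta & Hx).
  exists delta. split; [exact Hdelta|]. intros y Hy.
  apply Hx; [lra | rewrite Rminus_0_r, Rabs_R0; exact Hdelta | exact Hy].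
Qed.

Lemma homotopy_continuous_rev_comp (h : R -> X -> X) (f : X -> X) :
  homotopy_continuous d h -> m_continuous d f ->
  homotopy_continuous d (fun t x => h (1 - t) (f x)).
Proof.
  intros Hh Hf t x eps Ht Heps.
  destruct (Hh (1 - t) (f x) eps ltac:(lra) Heps) as (delta1 & Hdelta1 & Hx).
  destruct (Hf x delta1 Hdelta1) as (delta2 & Hdelta2 & Hfx).
  exists (Rmin delta1 delta2). split; [now apply Rmin_glb_lt|].
  intros s y Hs Hst Hy. pose proof (Rmin_l delta1 delta2). pose proof (Rmin_r delta1 delta2).
  apply Hx; [lra | | apply Hfx; lra].
  replace (1 - s - (1 - t)) with (- (s - t)) by ring. rewrite Rabs_Ropp. lra.
Qed.

Lemma m_continuous_comp_homotopy (f : X -> X) (h : R -> X -> X) :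
  m_continuous d f -> homotopy_continuous d h ->
  homotopy_continuous d (fun t x => f (h t x)).
Proof.
  intros Hf Hh t x eps Ht Heps.
  destruct (Hf (h t x) eps Heps) as (delta1 & Hdelta1 & Hfx).
  destruct (Hh t x delta1 Ht Hdelta1) as (delta2 & Hdelta2 & Hx).
  exists delta2. split; [exact Hdelta2|]. intros s y Hs Hst Hy. apply Hfx, Hx; assumption.
Qed.

End HomotopyContinuity.

Section Concatenation.
Context {X : Type} (d : X -> X -> R) (P : nat -> R -> X -> X).
Hypothesis Hd : is_metric d.
Hypothesis P_cont : forall j, homotopy_continuous d (P j).
Hypothesis P_glue : forall j x, P j 1 x = P (S j) 0 x.

Definition concat (u : R) (x : X) : X := P (nat_floor u) (u - INR (nat_floor u)) x.

Lemma concat_continuous u0 x0 eps : 0 <= u0 -> 0 < eps ->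
  exists delta, 0 < delta /\ forall u y, 0 <= u -> Rabs (u - u0) < delta ->
    d x0 y < delta -> d (concat u0 x0) (concat u y) < eps.
Proof.
  intros Hu0 Heps. destruct Hd as (_ & Hdist0 & _ & Htri).
  unfold concat. destruct (nat_floor_spec u0 Hu0) as [F0 F1].
  remember (nat_floor u0) as j0 eqn:Hj0. clear Hj0.
  destruct (P_cont j0 (u0 - INR j0) x0 (eps / 2) ltac:(lra) ltac:(lra))
    as (delta1 & Hdelta1 & Hnear1).
  assert (same_piece : forall u y, INR j0 <= u < INR j0 + 1 -> Rabs (u - u0) < delta1 ->
    d x0 y < delta1 -> d (P j0 (u0 - INR j0) x0) (P (nat_floor u) (u - INR (nat_floor u)) y) < eps).
  { intros u y Hu Hdu Hy. rewrite (nat_floor_unique u j0 Hu).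
    apply Rlt_trans with (eps / 2); [|lra]. apply Hnear1; [lra | | exact Hy].
    now replace (u - INR j0 - (u0 - INR j0)) with (u - u0) by ring. }
  destruct j0 as [|j1].
  - simpl in *. exists (Rmin delta1 (1 - u0)). split; [apply Rmin_glb_lt; lra|].
    intros u y Hu Hdu Hy. pose proof (Rmin_l delta1 (1 - u0)). pose proof (Rmin_r delta1 (1 - u0)).
    apply Rabs_def2 in Hdu as Hdu'. apply same_piece; simpl; lra.
  - (* At the junction [u0 = j1 + 1], times just below [u0] belong to the previous piece. *)
    destruct (P_cont j1 1 x0 (eps / 2) ltac:(lra) ltac:(lra)) as (delta2 & Hdelta2 & Hnear2).
    rewrite S_INR in *. set (t0 := u0 - (INR j1 + 1)) in *.
    assert (Ht0 : t0 = u0 - (INR j1 + 1)) by reflexivity. clearbody t0.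
    exists (Rmin (Rmin delta1 delta2) (1 - t0)). split; [repeat apply Rmin_glb_lt; lra|].
    intros u y Hu Hdu Hy.
    pose proof (Rmin_l (Rmin delta1 delta2) (1 - t0)). pose proof (Rmin_r (Rmin delta1 delta2) (1 - t0)).
    pose proof (Rmin_l delta1 delta2). pose proof (Rmin_r delta1 delta2).
    apply Rabs_def2 in Hdu as Hdu'.
    destruct (Rle_lt_dec (INR j1 + 1) u) as [Hle|Hlt].
    + apply same_piece; rewrite ?S_INR; lra.
    + rewrite (nat_floor_unique u j1) by lra.
      apply Rle_lt_trans with (d (P (S j1) t0 x0) (P j1 1 x0) + d (P j1 1 x0) (P j1 (u - INR j1) y));
        [apply Htri|].
      rewrite (P_glue j1 x0) at 1. replace eps with (eps / 2 + eps / 2) by field.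
      apply Rplus_lt_compat.
      * apply Hnear1; [lra | apply Rabs_def1; lra | rewrite (proj2 (Hdist0 x0 x0) eq_refl); lra].
      * apply Hnear2; [lra | apply Rabs_def1; lra | lra].
Qed.

Lemma concat_along_continuous (u : X -> R) :
  (forall x, 0 <= u x) -> real_continuous d u -> m_continuous d (fun x => concat (u x) x).
Proof.
  intros Hu_pos Hu x0 eps Heps.
  destruct (concat_continuous (u x0) x0 eps (Hu_pos x0) Heps) as (delta1 & Hdelta1 & Hnear).
  destruct (Hu x0 delta1 Hdelta1) as (delta2 & Hdelta2 & Hux).
  exists (Rmin delta1 delta2). split; [now apply Rmin_glb_lt|].
  intros y Hy. pose proof (Rmin_l delta1 delta2). pose proof (Rmin_r delta1 delta2).
  apply Hnear; [apply Hu_pos | apply Hux; lra | lra].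
Qed.

End Concatenation.

Section Zigzag.
Context {X : Type} (d : X -> X -> R) (H : nat -> R -> X -> X) (e : nat -> R).
Hypothesis Hd : is_metric d.
Hypothesis H_cont : forall k, homotopy_continuous d (H k).
Hypothesis H_end : forall k a, H k 1 a = a.
Hypothesis H_small : forall k a t s, 0 <= t <= 1 -> 0 <= s <= 1 -> d (H k t a) (H k s a) <= e k.

(* With [f k := H k 0], piece [2k] runs from [f k x] to [f (k+1) (f k x)] and piece [2k+1]
   from there to [f (k+1) x]; every point of piece [2k] stays [e (k+1)]-close to the image of
   [f k], and piece [2k+1] lies in the image of [f (k+1)]. *)
Definition zigzag (j : nat) (t : R) (x : X) : X :=
  if Nat.even j then H (S (Nat.div2 j)) (1 - t) (H (Nat.div2 j) 0 x)
  else H (S (Nat.div2 j)) 0 (H (Nat.div2 j) t x).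

Lemma zigzag_continuous j : homotopy_continuous d (zigzag j).
Proof.
  unfold zigzag. destruct (Nat.even j).
  - apply homotopy_continuous_rev_comp; [|apply homotopy_continuous_at0]; apply H_cont.
  - apply m_continuous_comp_homotopy; [apply homotopy_continuous_at0|]; apply H_cont.
Qed.

Lemma zigzag_glue j x : zigzag j 1 x = zigzag (S j) 0 x.
Proof.
  unfold zigzag.
  destruct (Nat.Even_or_Odd j) as [[k ->]|[k ->]].
  - replace (S (2 * k)) with (2 * k + 1)%nat by lia.
    rewrite Nat.even_even, Nat.even_odd, Nat.div2_double, Nat.div2_odd', Rminus_diag.
    reflexivity.
  - replace (S (2 * k + 1)) with (2 * S k)%nat by lia.
    rewrite Nat.even_even, Nat.even_odd, Nat.div2_double, Nat.div2_odd', Rminus_0_r, !H_end.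
    reflexivity.
Qed.

Lemma zigzag_displacement j t x : 0 <= t <= 1 ->
  d x (zigzag j t x) <= e (Nat.div2 j) + e (S (Nat.div2 j)).
Proof.
  intros Ht. destruct Hd as (_ & _ & _ & Htri). unfold zigzag.
  set (k := Nat.div2 j). set (y := if Nat.even j then H k 0 x else H k t x).
  apply Rle_trans with (d x y + d y (H (S k) (if Nat.even j then 1 - t else 0) y)).
  - subst y. destruct (Nat.even j); apply Htri.
  - apply Rplus_le_compat.
    + rewrite <- (H_end k x) at 1. subst y. destruct (Nat.even j); apply H_small; lra.
    + rewrite <- (H_end (S k) y) at 1. destruct (Nat.even j); apply H_small; lra.
Qed.

Lemma zigzag_near_stage j t x : 0 <= t <= 1 ->
  exists m, (m <= S j)%nat /\ exists w, d (zigzag j t x) (H m 0 w) <= e (S m).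
Proof.
  intros Ht. destruct Hd as (Hpos & Hdist0 & _ & _).
  pose proof (Nat.le_div2_diag_l j). unfold zigzag.
  destruct (Nat.even j).
  - exists (Nat.div2 j). split; [lia|]. exists x.
    rewrite <- (H_end (S (Nat.div2 j)) (H (Nat.div2 j) 0 x)) at 2. apply H_small; lra.
  - exists (S (Nat.div2 j)). split; [lia|]. exists (H (Nat.div2 j) t x).
    rewrite (proj2 (Hdist0 _ _) eq_refl).
    apply Rle_trans with (d (H (S (S (Nat.div2 j))) 0 x) (H (S (S (Nat.div2 j))) 0 x));
      [apply Hpos | apply H_small; lra].
Qed.

Lemma concat_zigzag_displacement u x : 0 <= u ->
  d x (concat zigzag u x) <= e (Nat.div2 (nat_floor u)) + e (S (Nat.div2 (nat_floor u))).
Proof.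
  intros Hu. destruct (nat_floor_spec u Hu). apply zigzag_displacement; auto. lra.
Qed.

Lemma concat_zigzag_near_stage u x : 0 <= u ->
  exists m, (m <= S (nat_floor u))%nat /\ exists w, d (concat zigzag u x) (H m 0 w) <= e (S m).
Proof.
  intros Hu. destruct (nat_floor_spec u Hu). apply zigzag_near_stage; auto. lra.
Qed.

End Zigzag.

(* The second term keeps the path [D (eps_seq D k) / 4]-close to the images of stage [k],
   whose separation constant is [D (eps_seq D k)]; the first makes the stages used at time
   [1 / r] move points by less than [r / 2]. *)
Fixpoint eps_seq (D : R -> R) (k : nat) : R :=
  match k with
  | O => / 16
  | S k' => Rmin (/ (16 * (INR k' + 2))) (D (eps_seq D k') / 8)
  end.

Lemma eps_seq_pos D : (forall eps, 0 < eps -> 0 < D eps) -> forall k, 0 < eps_seq D k.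
Proof.
  intros HD k. induction k as [|k IH]; simpl; [lra|].
  apply Rmin_glb_lt; [|specialize (HD _ IH); lra].
  apply Rinv_0_lt_compat. pose proof (pos_INR k). lra.
Qed.

Lemma eps_seq_S_le D k : eps_seq D (S k) <= D (eps_seq D k) / 8.
Proof. apply Rmin_r. Qed.

Lemma eps_seq_le_inv D k : eps_seq D k <= / (16 * (INR k + 1)).
Proof.
  destruct k as [|k]; [simpl; lra|].
  rewrite S_INR. replace (INR k + 1 + 1) with (INR k + 2) by ring. apply Rmin_l.
Qed.

Lemma eps_seq_stage_lt_half D r : 0 < r ->
  eps_seq D (Nat.div2 (nat_floor (/ r))) + eps_seq D (S (Nat.div2 (nat_floor (/ r)))) < r / 2.
Proof.
  intros Hr. set (j := nat_floor (/ r)). set (k := Nat.div2 j).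
  destruct (nat_floor_spec (/ r)) as [_ Hj]; [apply Rlt_le, Rinv_0_lt_compat, Hr|]. fold j in Hj.
  assert (Hjk : INR j + 1 <= 2 * (INR k + 1)).
  { rewrite (Nat.div2_odd j). fold k. rewrite plus_INR, mult_INR.
    destruct (Nat.odd j); simpl; lra. }
  set (a := INR k + 1) in *. assert (Ha : 0 < a) by (unfold a; pose proof (pos_INR k); lra).
  assert (Hra : 1 < 2 * a * r).
  { apply Rmult_lt_reg_r with (/ r); [now apply Rinv_0_lt_compat|].
    rewrite Rmult_assoc, Rinv_r, Rmult_1_l, Rmult_1_r; lra. }
  pose proof (eps_seq_le_inv D k) as Hk. pose proof (eps_seq_le_inv D (S k)) as HSk.
  rewrite S_INR in HSk. fold a in Hk, HSk.
  assert (/ (16 * (a + 1)) <= / (16 * a)) by (apply Rinv_le_contravar; lra).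
  assert (/ (16 * a) < r / 4).
  { apply Rmult_lt_reg_r with (16 * a); [lra|]. rewrite Rinv_l; nra. }
  lra.
Qed.

Lemma lub_approx (E : R -> Prop) l b : is_lub E l -> b < l -> exists r, E r /\ b < r.
Proof.
  intros [_ Hleast] Hb. apply NNPP. intros Hnone.
  enough (l <= b) by lra. apply Hleast. intros r Hr.
  destruct (Rle_lt_dec r b) as [Hle|Hlt]; [exact Hle|]. exfalso. eauto.
Qed.

Lemma lebesgue_radius_exists {X : Type} (d : X -> X -> R) (C : (X -> Prop) -> Prop) :
  is_metric d -> open_cover d C ->
  exists rho : X -> R, (forall x, 0 < rho x) /\
    (forall x, exists U, C U /\ forall y, d x y < rho x / 2 -> U y) /\
    (forall x y, rho x <= rho y + d x y).
Proof.
  intros (Hpos & _ & _ & Htri) [C_open C_covers].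
  set (E x r := 0 < r <= 1 /\ exists U, C U /\ forall y, d x y < r -> U y).
  assert (E_inh : forall x, exists r, E x r).
  { intros x. destruct (C_covers x) as (U & HU & Ux).
    destruct (C_open U HU x Ux) as (r & Hr & Hball).
    exists (Rmin r 1). split; [split; [now apply Rmin_glb_lt; lra | apply Rmin_r]|].
    exists U. split; [exact HU|]. intros y Hy. apply Hball. pose proof (Rmin_l r 1). lra. }
  assert (E_bounded : forall x, bound (E x)) by (exists 1; intros r ((_ & Hr) & _); exact Hr).
  assert (E_sup : exists rho : X -> R, forall x, is_lub (E x) (rho x)).
  { exists (fun x => proj1_sig (completeness (E x) (E_bounded x) (E_inh x))).
    intros x. apply proj2_sig. }
  destruct E_sup as [rho Hrho].
  assert (rho_pos : forall x, 0 < rho x).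
  { intros x. destruct (E_inh x) as [r Hr]. pose proof (proj1 (Hrho x) r Hr).
    destruct Hr as [[Hr _] _]. lra. }
  exists rho. split; [exact rho_pos|split].
  - intros x. pose proof (rho_pos x).
    destruct (lub_approx (E x) (rho x) (rho x / 2) (Hrho x)) as (r & (_ & U & HU & Hball) & Hr);
      [lra|].
    exists U. split; [exact HU|]. intros y Hy. apply Hball. lra.
  - intros x y. apply (proj2 (Hrho x)). intros r ((Hr0 & Hr1) & U & HU & Hball).
    pose proof (rho_pos y). pose proof (Hpos x y).
    destruct (Rle_lt_dec r (d x y)) as [Hle|Hlt]; [lra|].
    enough (r - d x y <= rho y) by lra.
    apply (proj1 (Hrho y)). split; [lra|]. exists U. split; [exact HU|].
    intros z Hz. apply Hball. pose proof (Htri x y z). lra.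
Qed.

Lemma inv_lipschitz_continuous {X : Type} (d : X -> X -> R) (rho : X -> R) :
  is_metric d -> (forall x, 0 < rho x) -> (forall x y, rho x <= rho y + d x y) ->
  real_continuous d (fun x => / rho x).
Proof.
  intros (_ & _ & Hsym & _) Hrho_pos Hlip x eps Heps. pose proof (Hrho_pos x) as Hx.
  exists (Rmin (rho x / 2) (eps * (rho x * rho x) / 2)).
  split; [apply Rmin_glb_lt; [lra|]; apply Rdiv_lt_0_compat; [apply Rmult_lt_0_compat|]; nra|].
  intros y Hy. pose proof (Rmin_l (rho x / 2) (eps * (rho x * rho x) / 2)).
  pose proof (Rmin_r (rho x / 2) (eps * (rho x * rho x) / 2)).
  pose proof (Hlip x y). pose proof (Hlip y x). rewrite (Hsym y x) in *. pose proof (Hrho_pos y).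
  assert (Hdiff : Rabs (rho x - rho y) <= d x y) by (apply Rabs_le; lra).
  replace (/ rho y - / rho x) with ((rho x - rho y) / (rho x * rho y)) by (field; lra).
  unfold Rdiv. rewrite Rabs_mult, (Rabs_pos_eq (/ _)) by (apply Rlt_le, Rinv_0_lt_compat; nra).
  apply Rmult_lt_reg_r with (rho x * rho y); [nra|].
  rewrite Rmult_assoc, Rinv_l, Rmult_1_r by nra. nra.
Qed.

Lemma bounded_of_unique (Q : nat -> Prop) :
  (forall n n', Q n -> Q n' -> n = n') -> exists N, forall n, Q n -> (n < N)%nat.
Proof.
  intros Huniq. destruct (classic (exists n, Q n)) as [[n0 Hn0]|Hnone].
  - exists (S n0). intros n Hn. rewrite (Huniq n n0 Hn Hn0). lia.
  - exists O. intros n Hn. exfalso. eauto.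
Qed.

Lemma bounded_of_unique_upto (Q : nat -> nat -> Prop) M :
  (forall m n n', (m <= M)%nat -> Q m n -> Q m n' -> n = n') ->
  exists N, forall m n, (m <= M)%nat -> Q m n -> (n < N)%nat.
Proof.
  intros Huniq. induction M as [|M IH].
  - destruct (bounded_of_unique (Q O) (fun n n' => Huniq O n n' (le_n O))) as [N HN].
    exists N. intros m n Hm. replace m with O by lia. apply HN.
  - destruct IH as [N1 HN1]; [intros m n n' Hm; apply Huniq; lia|].
    destruct (bounded_of_unique (Q (S M)) (fun n n' => Huniq (S M) n n' (le_n _))) as [N2 HN2].
    exists (Nat.max N1 N2). intros m n Hm Hn.
    destruct (Nat.eq_dec m (S M)) as [->|Hne].
    + specialize (HN2 n Hn). lia.
    + specialize (HN1 m n ltac:(lia) Hn). lia.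
Qed.

Lemma pos_lower_bound_upto (f : nat -> R) M :
  (forall m, 0 < f m) -> exists r, 0 < r /\ forall m, (m <= M)%nat -> r <= f m.
Proof.
  intros Hf. induction M as [|M (r & Hr & Hle)].
  - exists (f O). split; [apply Hf|]. intros m Hm. replace m with O by lia. lra.
  - exists (Rmin r (f (S M))). split; [now apply Rmin_glb_lt|]. intros m Hm.
    destruct (Nat.eq_dec m (S M)) as [->|Hne]; [apply Rmin_r|].
    apply Rle_trans with r; [apply Rmin_l | apply Hle; lia].
Qed.

(* A ball of radius at most [delta m / 4] can meet the [delta m / 4]-neighbourhood of the
   image of [F m n] for at most one [n]. *)
Lemma locally_finite_of_near_separated {X : Type} (d : X -> X -> R)
    (A : nat -> X -> Prop) (F : nat -> nat -> X -> X) (delta : nat -> R) :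
  is_metric d -> (forall m, 0 < delta m) ->
  (forall m n n', n <> n' -> forall x y, delta m <= d (F m n x) (F m n' y)) ->
  (forall x0, exists r M, 0 < r /\ forall n y, A n y -> d x0 y < r ->
     exists m, (m <= M)%nat /\ exists w, d y (F m n w) <= delta m / 4) ->
  locally_finite d A.
Proof.
  intros (_ & Hdist0 & Hsym & Htri) delta_pos Hsep Hnear x0.
  destruct (Hnear x0) as (r0 & M & Hr0 & HnearM).
  destruct (pos_lower_bound_upto delta M delta_pos) as (dmin & Hdmin & Hle).
  set (r := Rmin r0 (dmin / 4)).
  assert (Hr : 0 < r) by (apply Rmin_glb_lt; lra).
  pose proof (Rmin_l r0 (dmin / 4)) as Hr_r0. pose proof (Rmin_r r0 (dmin / 4)) as Hr_dmin.
  fold r in Hr_r0, Hr_dmin.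
  exists (fun y => d x0 y < r). split; [|split].
  - intros z Hz. exists (r - d x0 z). split; [lra|].
    intros y Hy. pose proof (Htri x0 z y). lra.
  - rewrite (proj2 (Hdist0 x0 x0) eq_refl). exact Hr.
  - destruct (bounded_of_unique_upto
      (fun m n => exists y, d x0 y < r /\ exists w, d y (F m n w) <= delta m / 4) M)
      as [N HN].
    + intros m n n' Hm (y & Hy & w & Hw) (y' & Hy' & w' & Hw').
      destruct (Nat.eq_dec n n') as [|Hne]; [assumption|exfalso].
      pose proof (Hsep m n n' Hne w w'). pose proof (Hle m Hm).
      pose proof (Htri (F m n w) y (F m n' w')). pose proof (Htri y x0 (F m n' w')).
      pose proof (Htri x0 y' (F m n' w')).
      rewrite (Hsym (F m n w) y), (Hsym y x0) in *. lra.
    + exists N. intros n (y & Hy & HA).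
      destruct (HnearM n y HA ltac:(lra)) as (m & Hm & w & Hw).
      apply (HN m n Hm). eauto.
Qed.

Definition separated_homotopies {X : Type} (d : X -> X -> R) (eps delta : R)
    (h : nat -> R -> X -> X) : Prop :=
  (forall n, homotopy_continuous d (h n)) /\ (forall n a, h n 1 a = a) /\
  (forall n a t s, 0 <= t <= 1 -> 0 <= s <= 1 -> d (h n t a) (h n s a) <= eps) /\
  0 < delta /\ (forall n m, n <> m -> forall x y, delta <= d (h n 0 x) (h m 0 y)).

Lemma SAP_separated_homotopies {X : Type} (d : X -> X -> R) eps :
  SAP d -> 0 < eps -> exists delta h, separated_homotopies d eps delta h.
Proof.
  intros Hsap Heps. destruct (Hsap eps Heps) as (f & _ & Hhom & delta & Hdelta & Hsep).
  destruct (choice (fun n h => homotopy_continuous d h /\ (forall a, h 0 a = f n a) /\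
      (forall a, h 1 a = a) /\
      (forall a t s, 0 <= t <= 1 -> 0 <= s <= 1 -> d (h t a) (h s a) <= eps)) Hhom)
    as [h Hh].
  exists delta, h. repeat split; try (intros; apply Hh); try assumption.
  intros n m Hnm x y. rewrite !(proj1 (proj2 (Hh _))). now apply Hsep.
Qed.

Lemma SAP_choice {X : Type} (d : X -> X -> R) : SAP d ->
  exists (h : R -> nat -> R -> X -> X) (D : R -> R),
    forall eps, 0 < eps -> separated_homotopies d eps (D eps) (h eps).
Proof.
  intros Hsap.
  assert (Hex : forall eps, exists p : R * (nat -> R -> X -> X),
             0 < eps -> separated_homotopies d eps (fst p) (snd p)).
  { intros eps. destruct (classic (0 < eps)) as [Heps|Heps].
    - destruct (SAP_separated_homotopies d eps Hsap Heps) as (delta & h & Hh).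
      now exists (delta, h).
    - exists (0, fun _ _ x => x). now intros. }
  destruct (choice _ Hex) as [p Hp].
  now exists (fun eps => snd (p eps)), (fun eps => fst (p eps)).
Qed.

Section Approximation.
Context {X : Type} (d : X -> X -> R) (rho : X -> R) (h : R -> nat -> R -> X -> X) (D : R -> R).
Hypothesis Hd : is_metric d.
Hypothesis rho_pos : forall x, 0 < rho x.
Hypothesis rho_lip : forall x y, rho x <= rho y + d x y.
Hypothesis Hh : forall eps, 0 < eps -> separated_homotopies d eps (D eps) (h eps).

Lemma stage_eps_pos k : 0 < eps_seq D k.
Proof. apply eps_seq_pos. intros eps Heps. apply (Hh eps Heps). Qed.

Lemma stage_homotopies n :
  (forall k, homotopy_continuous d (h (eps_seq D k) n)) /\
  (forall k a, h (eps_seq D k) n 1 a = a) /\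
  (forall k a t s, 0 <= t <= 1 -> 0 <= s <= 1 ->
     d (h (eps_seq D k) n t a) (h (eps_seq D k) n s a) <= eps_seq D k).
Proof. repeat split; intros k; apply (Hh _ (stage_eps_pos k)). Qed.

Definition approx (n : nat) (x : X) : X :=
  concat (zigzag (fun k => h (eps_seq D k) n)) (/ rho x) x.

Lemma inv_rho_nonneg x : 0 <= / rho x.
Proof. apply Rlt_le, Rinv_0_lt_compat, rho_pos. Qed.

Lemma approx_continuous n : m_continuous d (approx n).
Proof.
  destruct (stage_homotopies n) as (Hcont & Hend & _).
  apply (concat_along_continuous d _ Hd (zigzag_continuous d _ Hcont) (zigzag_glue _ Hend));
    [exact inv_rho_nonneg|].
  now apply inv_lipschitz_continuous.
Qed.

Lemma approx_moves_little n x : d x (approx n x) < rho x / 2.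
Proof.
  destruct (stage_homotopies n) as (_ & Hend & Hsmall).
  eapply Rle_lt_trans;
    [exact (concat_zigzag_displacement d _ _ Hd Hend Hsmall _ x (inv_rho_nonneg x))|].
  apply eps_seq_stage_lt_half, rho_pos.
Qed.

Lemma approx_near_stage n x : exists m, (m <= S (nat_floor (/ rho x)))%nat /\
  exists w, d (approx n x) (h (eps_seq D m) n 0 w) <= D (eps_seq D m) / 4.
Proof.
  destruct (stage_homotopies n) as (_ & Hend & Hsmall).
  destruct (concat_zigzag_near_stage d _ _ Hd Hend Hsmall _ x (inv_rho_nonneg x))
    as (m & Hm & w & Hw).
  exists m. split; [exact Hm|]. exists w.
  pose proof (eps_seq_S_le D m). pose proof (Hh _ (stage_eps_pos m)) as (_ & _ & _ & HD & _).
  eapply Rle_trans; [exact Hw | lra].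
Qed.

Lemma approx_stage_bound n x x0 : d x0 (approx n x) < rho x0 / 2 -> / rho x <= 3 / rho x0.
Proof.
  intros Hnear. destruct Hd as (_ & _ & Hsym & _).
  pose proof (approx_moves_little n x). pose proof (rho_lip x0 (approx n x)).
  pose proof (rho_lip (approx n x) x). rewrite (Hsym (approx n x) x) in *.
  pose proof (rho_pos x). pose proof (rho_pos x0).
  unfold Rdiv. rewrite <- (Rinv_inv 3), <- Rinv_mult. apply Rinv_le_contravar; lra.
Qed.

End Approximation.

Theorem lemma1 (X : Type) (d : X -> X -> R) (Hd : is_metric d) :
  SAP d -> LFAP d.
Proof.
  intros Hsap C Hcover. pose proof Hd as (_ & Hdist0 & _ & _).
  destruct (lebesgue_radius_exists d C Hd Hcover) as (rho & rho_pos & rho_ball & rho_lip).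
  destruct (SAP_choice d Hsap) as (h & D & Hh).
  exists (approx rho h D). split; [|split].
  - intros n. now apply approx_continuous.
  - intros n x. destruct (rho_ball x) as (U & HU & Hball). exists U.
    split; [exact HU|]. split; apply Hball; [|now apply approx_moves_little].
    rewrite (proj2 (Hdist0 x x) eq_refl). pose proof (rho_pos x). lra.
  - apply (locally_finite_of_near_separated d _
             (fun m n => h (eps_seq D m) n 0) (fun m => D (eps_seq D m)) Hd).
    + intros m. apply (Hh _ (stage_eps_pos d h D Hh m)).
    + intros m. apply (Hh _ (stage_eps_pos d h D Hh m)).
    + intros x0. pose proof (rho_pos x0).
      exists (rho x0 / 2), (S (nat_floor (3 / rho x0))). split; [lra|].
      intros n y (x & <-) Hy.
      pose proof (approx_stage_bound d rho h D Hd rho_pos rho_lip Hh n x x0 Hy) as Hx.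
      pose proof (nat_floor_le (/ rho x) (3 / rho x0) (conj (inv_rho_nonneg rho rho_pos x) Hx)).
      destruct (approx_near_stage d rho h D Hd rho_pos Hh n x) as (m & Hm & Hw).
      exists m. split; [lia | exact Hw].
Qed.
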